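(* For every integer $k\geq 1$ there exists a finite tree $\tau$ such that $\mathrm{box}(\tau^k)>k$.
   Context: For a tree $\tau$, $\tau^k$ is the graph on $V(\tau)$ in which distinct $u,v$ are adjacent iff their distance in $\tau$ is at most $k$. The boxicity $\mathrm{box}(G)$ is the minimum integer $t$ such that $G$ is the intersection graph of axis-parallel $t$-dimensional boxes (Cartesian products of $t$ closed real intervals), i.e. there is a map $f$ from $V(G)$ to such boxes with $(u,v)\in E(G)\iff f(u)\cap f(v)\neq\emptyset$ for distinct $u,v$. *)

From mathcomp Require Import all_boot all_order all_algebra.
From mathcomp Require Import reals.
Set Implicit Arguments. Unset Strict Implicit. Unset Printing Implicit Defensive.
Import Order.TTheory GRing.Theory Num.Theory.
Local Open Scope ring_scope.

Definition is_tree (T : finType) (e : rel T) : Prop :=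
  [/\ 0 < #|T|, symmetric e, irreflexive e,
      (forall u v : T, connect e u v) &
      (forall p : seq T, uniq p -> 3 <= size p -> ~~ cycle e p)]%N.

Definition dist_le (T : finType) (e : rel T) (k : nat) (u v : T) : Prop :=
  exists p : seq T, [/\ path e u p, last u p = v & (size p <= k)%N].

Definition graph_pow (T : finType) (e : rel T) (k : nat) (u v : T) : Prop :=
  u <> v /\ dist_le e k u v.

Record box (R : realType) (t : nat) := Box {
  lo : 'I_t -> R; hi : 'I_t -> R; lo_le_hi : forall i, lo i <= hi i }.

Definition in_box (R : realType) t (b : box R t) (x : 'I_t -> R) : Prop :=
  forall i, lo b i <= x i <= hi b i.

Definition boxes_meet (R : realType) t (b1 b2 : box R t) : Prop :=
  exists x : 'I_t -> R, in_box b1 x /\ in_box b2 x.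

Definition box_rep (R : realType) (T : finType) (G : T -> T -> Prop) (t : nat) :
  Prop :=
  exists f : T -> box R t,
    forall u v : T, u <> v -> (G u v <-> boxes_meet (f u) (f v)).

Definition boxicity_gt (R : realType) (T : finType) (G : T -> T -> Prop)
  (k : nat) : Prop :=
  ~ exists t : nat, (t <= k)%N /\ box_rep R G t.

From mathcomp Require Import all_boot all_order all_algebra.
From mathcomp Require Import reals.
From mathcomp Require Import zify.
Set Implicit Arguments. Unset Strict Implicit. Unset Printing Implicit Defensive.
Import Order.TTheory GRing.Theory Num.Theory.

(* The tree is a spider: M legs c - v(i,0) - v(i,1) - ... - v(i,k) hanging from
   a centre c.  In its k-th power c is adjacent to every inner vertex v(i,p),
   p < k, but not to the foot v(i,k), so in a box representation some coordinate
   separates the box of c from that of v(i,k), in one of two directions.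
   Vertices v(i,p) and v(j,q) of different legs are adjacent iff p + q + 2 <= k;
   in particular v(i,p) and v(j,k-1-p) are not, and some coordinate separates
   them.  Colour each pair of legs i < j by these separating coordinates and
   directions together with the one separating c from v(i,k).  As M exceeds
   2 ^ (number of colours), there are legs i < j < l such that (i,j) and (j,l)
   get the same colour.  Interlacing of intervals then shows that the k
   coordinates separating v(i,p) from v(j,k-1-p) are pairwise distinct, and they
   differ from the coordinate separating c from the feet of legs i and j, in
   which all inner vertices of both legs overlap.  Hence there are at least
   k + 1 coordinates. *)

Definition parent_rel (T : eqType) (root : T) (par : T -> T) : rel T :=
  fun u v => (v != root) && (u == par v) || (u != root) && (v == par u).

Section ParentTree.

Variables (T : finType) (root : T) (par : T -> T) (rank : T -> nat).
Hypothesis rank_par : forall v, v != root -> rank (par v) < rank v.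

Local Notation e := (parent_rel root par).

Lemma parent_rel_sym : symmetric e.
Proof. by move=> u v; rewrite /parent_rel orbC. Qed.

Lemma parent_rel_irr : irreflexive e.
Proof.
move=> u; rewrite /parent_rel orbb; apply/negP=> /andP[/rank_par + /eqP u_par].
by rewrite -u_par ltnn.
Qed.

Lemma connect_parent_rel_root v : connect e v root.
Proof.
move: {2}(rank v) (erefl (rank v)) => n; elim/ltn_ind: n v => n IH v rank_v.
have [-> | v_nroot] := eqVneq v root; first exact: connect0.
have v_par : e v (par v) by rewrite /parent_rel v_nroot eqxx orbT.
apply: connect_trans (connect1 v_par) (IH _ _ _ erefl).
by rewrite -rank_v rank_par.
Qed.

Lemma parent_rel_rank_le x y : e x y -> rank y <= rank x -> y = par x.
Proof.
case/orP=> /andP[y_nroot /eqP xy]; last by [].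
by move/rank_par: y_nroot; rewrite -xy => /leq_trans/[apply]; rewrite ltnn.
Qed.

Lemma parent_rel_acyclic p : uniq p -> 3 <= size p -> ~~ cycle e p.
Proof.
move=> p_uniq p_size; apply/negP=> p_cycle.
have p_head : head root p \in p by case: p p_size {p_uniq p_cycle} => // ? ?; rewrite mem_head.
(* Both cycle neighbours of a vertex of maximal rank must be its parent. *)
pose x := [arg max_(i > head root p | i \in p) rank i].
have [x_p x_max] : x \in p /\ forall y, y \in p -> rank y <= rank x.
  by rewrite /x; case: arg_maxnP => // z z_p z_max; split=> // y /z_max.
case/rot_to: x_p => i q rot_p.
have : cycle e (x :: q) by rewrite -rot_p rot_cycle.
have : uniq (x :: q) by rewrite -rot_p rot_uniq.
have q_p y : y \in q -> y \in p by move=> y_q; rewrite -(mem_rot i) rot_p inE y_q orbT.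
have : 2 <= size q by rewrite -ltnS -[(size q).+1]/(size (x :: q)) -rot_p size_rot.
case: q q_p {rot_p} => [|y [|a q]] // q_p _ /andP[_ /andP[y_nq _]].
rewrite /cycle rcons_path /= => /andP[/andP[xy _] zx].
have par_y : y = par x by apply: parent_rel_rank_le xy (x_max _ (q_p _ (mem_head _ _))).
have par_z : last a q = par x.
  apply: parent_rel_rank_le; first by rewrite parent_rel_sym.
  by apply/x_max/q_p; rewrite inE mem_last orbT.
by move: y_nq; rewrite par_y -par_z mem_last.
Qed.

Lemma is_tree_parent_rel : is_tree e.
Proof.
split; first by apply/card_gt0P; exists root.
- exact: parent_rel_sym.
- exact: parent_rel_irr.
- move=> u v; apply: connect_trans (connect_parent_rel_root u) _.
  by rewrite (sym_connect_sym parent_rel_sym); apply: connect_parent_rel_root.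
- exact: parent_rel_acyclic.
Qed.

End ParentTree.

Section Walks.

Variables (T : finType) (e : rel T).

Lemma dist_le_edge u v : e u v -> dist_le e 1 u v.
Proof. by exists [:: v]; rewrite /= andbT. Qed.

Lemma dist_le_cat m n u w v :
  dist_le e m u w -> dist_le e n w v -> dist_le e (m + n) u v.
Proof.
move=> [p [up_path <- p_size]] [q [wq_path <- q_size]]; exists (p ++ q).
by rewrite cat_path up_path wq_path last_cat size_cat leq_add.
Qed.

Lemma dist_le_rcons n u w v : dist_le e n u w -> e w v -> dist_le e n.+1 u v.
Proof. by move=> uw /dist_le_edge wv; rewrite -addn1; apply: dist_le_cat uw wv. Qed.

Lemma dist_le_mono m n u v : m <= n -> dist_le e m u v -> dist_le e n u v.
Proof. by move=> le_mn [p [? ? p_size]]; exists p; split=> //; apply: leq_trans le_mn. Qed.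

Lemma dist_le_sym n u v : symmetric e -> dist_le e n u v -> dist_le e n v u.
Proof.
move=> e_sym [p [up_path <- p_size]]; exists (rev (belast u p)); split.
- by rewrite rev_path; apply: etrans up_path; apply: eq_path => x y; apply: e_sym.
- by case: p {up_path p_size} => //= y p; rewrite rev_cons last_rcons.
- by rewrite size_rev size_belast.
Qed.

Lemma graph_pow_sym k u v : symmetric e -> graph_pow e k u v -> graph_pow e k v u.
Proof. by move=> e_sym [/nesym neq_vu /(dist_le_sym e_sym)]. Qed.

Lemma dist_le_potential (g : T -> int) n u v :
  (forall x y, e x y -> (g x - g y <= 1)%R) ->
  dist_le e n u v -> (g u - g v <= n%:Z)%R.
Proof.
move=> g_lip [p [up_path <- p_size]]; apply: le_trans (_ : _ <= (size p)%:Z)%R _;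
  last by rewrite lez_nat.
elim: p u up_path {p_size} => [|y p IH] u /=; first by rewrite subrr.
move=> /andP[/g_lip uy /IH]; rewrite -addn1; lia.
Qed.

End Walks.

Section Spider.

Variables M k : nat.

Local Notation V := (option ('I_M * 'I_k.+1)).

Definition spider_parent (v : V) : V :=
  if v is Some (i, a) then if val a is a'.+1 then Some (i, inord a') else None
  else None.

Definition spider_rel : rel V := parent_rel None spider_parent.

Definition leg (i : 'I_M) (a : nat) : V := Some (i, inord a).

Lemma is_tree_spider : is_tree spider_rel.
Proof.
apply: (@is_tree_parent_rel _ _ _ (fun v => if v is Some (_, a) then (val a).+1 else 0)).
by move=> [[i [[|a] a_lt]]|] //= _; rewrite inordK // ltnW.
Qed.

Lemma spider_rel_sym : symmetric spider_rel.
Proof. exact: parent_rel_sym. Qed.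

Lemma leg_inj i j a b : a <= k -> b <= k -> leg i a = leg j b -> i = j /\ a = b.
Proof. by move=> a_le b_le [-> /(congr1 (@nat_of_ord _))]; rewrite !inordK ?ltnS. Qed.

Lemma spider_rel_center i : spider_rel None (leg i 0).
Proof. by rewrite /spider_rel /parent_rel /spider_parent /leg /= inordK. Qed.

Lemma spider_rel_leg i a : a < k -> spider_rel (leg i a) (leg i a.+1).
Proof.
by move=> a_lt; rewrite /spider_rel /parent_rel /spider_parent /leg /= !inordK ?eqxx // ltnW.
Qed.

Lemma dist_center_leg i a : a <= k -> dist_le spider_rel a.+1 None (leg i a).
Proof.
elim: a => [|a IH] a_le; first exact/dist_le_edge/spider_rel_center.
exact: dist_le_rcons (IH (ltnW a_le)) (spider_rel_leg i a_le).
Qed.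

Lemma dist_leg i a b : a <= b -> b <= k -> dist_le spider_rel (b - a) (leg i a) (leg i b).
Proof.
elim: b => [|b IH] le_ab b_le.
  by move: le_ab; rewrite leqn0 => /eqP->; exists [::].
case: (ltngtP a b.+1) le_ab => // [lt_ab | ->] _; last by rewrite subnn; exists [::].
rewrite subSn //; exact: dist_le_rcons (IH lt_ab (ltnW b_le)) (spider_rel_leg i b_le).
Qed.

Definition leg_potential (i : 'I_M) (v : V) : int :=
  if v is Some (j, a) then (if j == i then (val a).+1%:Z else - (val a).+1%:Z)%R
  else 0%R.

Lemma leg_potential_lipschitz i u v :
  spider_rel u v -> (leg_potential i u - leg_potential i v <= 1)%R.
Proof.
case/orP=> /andP[nroot /eqP ->].
- by case: v nroot => [[j [[|a] a_lt]]|] //= _; rewrite ?inordK //; case: (j == i); lia.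
- by case: u nroot => [[j [[|a] a_lt]]|] //= _; rewrite ?inordK //; case: (j == i); lia.
Qed.

Lemma center_foot_far i : ~ dist_le spider_rel k None (leg i k).
Proof.
move/(dist_le_sym spider_rel_sym)/(dist_le_potential (@leg_potential_lipschitz i)).
by rewrite /= eqxx inordK //; lia.
Qed.

Lemma cross_legs_far i j a b : i != j -> a <= k -> b <= k -> k <= (a + b).+1 ->
  ~ dist_le spider_rel k (leg i a) (leg j b).
Proof.
move=> neq_ij a_le b_le ab_ge /(dist_le_potential (@leg_potential_lipschitz i)).
by rewrite /= eqxx eq_sym (negbTE neq_ij) !inordK //; lia.
Qed.

Local Notation adj := (graph_pow spider_rel k).

Lemma adj_center_leg i a : a < k -> adj None (leg i a).
Proof.
by move=> a_lt; split=> //; apply: dist_le_mono a_lt (dist_center_leg i (ltnW a_lt)).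
Qed.

Lemma adj_same_leg i a b : a != b -> a <= k -> b <= k -> adj (leg i a) (leg i b).
Proof.
wlog lt_ab : a b / a < b => [sym_ab | _ a_le b_le].
  move=> neq_ab a_le b_le; have [lt_ab | lt_ba | eq_ab] := ltngtP a b.
  - exact: sym_ab.
  - by apply/(graph_pow_sym spider_rel_sym)/sym_ab; rewrite // eq_sym.
  - by rewrite eq_ab eqxx in neq_ab.
split; first by move/leg_inj=> -[] // _ eq_ab; move: lt_ab; rewrite eq_ab ltnn.
exact: dist_le_mono (leq_trans (leq_subr a b) b_le) (dist_leg i (ltnW lt_ab) b_le).
Qed.

Lemma adj_cross_legs i l a b : i != l -> (a + b).+2 <= k -> adj (leg i a) (leg l b).
Proof.
move=> neq_il ab_lt; split; first by case=> /eqP; rewrite (negbTE neq_il).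
have a_le : a <= k by lia.
have b_le : b <= k by lia.
have i_center := dist_le_sym spider_rel_sym (dist_center_leg i a_le).
by apply: dist_le_mono (dist_le_cat i_center (dist_center_leg l b_le)); lia.
Qed.

End Spider.

Arguments spider_rel : clear implicits.
Arguments spider_rel_sym {M k}.

Section Boxes.

Variables (R : realType) (t : nat).

Definition box_below (b1 b2 : box R t) (d : 'I_t) : bool := (hi b1 d < lo b2 d)%R.

Lemma box_below_irr b d : ~~ box_below b b d.
Proof. by rewrite /box_below -leNgt lo_le_hi. Qed.

Lemma boxes_meet_not_below b1 b2 d : boxes_meet b1 b2 -> ~~ box_below b1 b2 d.
Proof.
move=> [x [in1 in2]]; rewrite /box_below -leNgt.
by case/andP: (in1 d) => _ /(le_trans _)->; case/andP: (in2 d).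
Qed.

Lemma not_boxes_meet_below b1 b2 :
  ~ boxes_meet b1 b2 -> exists d, box_below b1 b2 d || box_below b2 b1 d.
Proof.
move=> no_meet.
have [/existsP // | /existsPn no_below] :=
  boolP [exists d, box_below b1 b2 d || box_below b2 b1 d].
case: no_meet.
exists (fun d => Num.max (lo b1 d) (lo b2 d)); split=> d; rewrite /in_box.
all: move: (no_below d); rewrite negb_or /box_below -!leNgt => /andP[le21 le12].
all: by rewrite ge_max le_max lexx ?orbT ?lo_le_hi ?le21 ?le12.
Qed.

Lemma box_below_link a b x y d : box_below a b d -> ~~ box_below x b d ->
  ~~ box_below a y d -> ~~ box_below x y d.
Proof.
rewrite /box_below -!leNgt => lt_ab le_bx le_ya.
exact/ltW/(le_lt_trans le_ya)/(lt_le_trans lt_ab le_bx).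
Qed.

End Boxes.

Lemma pair_colouring_path (C : finType) n (col : 'I_n -> 'I_n -> C) : 2 ^ #|C| < n ->
  exists i j l : 'I_n, [/\ i < j, j < l & col i j = col j l].
Proof.
pose S (j : 'I_n) := [set col h j | h : 'I_n & h < j].
have [S_inj | /injectivePn[x [y neq_xy eq_S]]] := boolP (injectiveb S).
  have := leq_card S (injectiveP S S_inj).
  by rewrite card_ord -cardsT -powersetT card_powerset cardsT leqNgt => /negP.
move=> _; wlog lt_xy : x y neq_xy eq_S / x < y.
  move=> sym_xy; case: (ltngtP x y) => [| lt_yx |/val_inj eq_xy]; first exact: sym_xy.
    by apply: (sym_xy y x); rewrite // eq_sym.
  by rewrite eq_xy eqxx in neq_xy.
have : col x y \in S y by apply/imsetP; exists x; rewrite ?inE.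
rewrite -eq_S => /imsetP[h]; rewrite inE => lt_hx col_hx.
by exists h, x, y; rewrite col_hx.
Qed.

Section SpiderBoxicity.

Variables (R : realType) (M k t : nat).

Local Notation V := (option ('I_M * 'I_k.+1)).
Local Notation leg := (leg k).
Local Notation foot i := (leg i k).

Variable f : V -> box R t.
Hypothesis f_rep : forall u v : V, u <> v ->
  (graph_pow (spider_rel M k) k u v <-> boxes_meet (f u) (f v)).

Local Notation below u v := (box_below (f u) (f v)).

Lemma adj_not_below u v d : graph_pow (spider_rel M k) k u v -> ~~ below u v d.
Proof. by move=> adj_uv; apply/boxes_meet_not_below/(f_rep adj_uv.1). Qed.

Lemma leg_touch i a b d : a <= k -> b <= k -> ~~ below (leg i a) (leg i b) d.
Proof.
have [-> | neq_ab] := eqVneq a b; first by rewrite box_below_irr.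
by move=> a_le b_le; apply/adj_not_below/adj_same_leg.
Qed.

Lemma cross_touch i l a b d : i != l -> (a + b).+2 <= k -> ~~ below (leg i a) (leg l b) d.
Proof. by move=> neq_il ab_lt; apply/adj_not_below/adj_cross_legs. Qed.

Lemma center_touch i a d : a < k -> ~~ below None (leg i a) d /\ ~~ below (leg i a) None d.
Proof.
move=> a_lt; have adj_ca := adj_center_leg i a_lt.
by split; apply: adj_not_below; last apply: graph_pow_sym spider_rel_sym adj_ca.
Qed.

Definition separates u v (ds : 'I_t * bool) : bool :=
  if ds.2 then below u v ds.1 else below v u ds.1.

Definition separator u v : option ('I_t * bool) := [pick ds | separates u v ds].

Lemma separator_separates u v ds : separator u v = Some ds -> separates u v ds.
Proof. by rewrite /separator; case: pickP => // ? ? [<-]. Qed.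

Lemma separatorP u v : u <> v -> ~ dist_le (spider_rel M k) k u v ->
  exists2 ds, separator u v = Some ds & separates u v ds.
Proof.
move=> neq_uv far_uv; rewrite /separator; case: pickP => [ds | no_sep]; first by exists ds.
have [d /orP[] below_d] := not_boxes_meet_below (fun meet => far_uv ((f_rep neq_uv).2 meet).2).
- by have := no_sep (d, true); rewrite /separates below_d.
- by have := no_sep (d, false); rewrite /separates below_d.
Qed.

Lemma foot_separatorP i :
  exists2 ds, separator None (foot i) = Some ds & separates None (foot i) ds.
Proof. by apply: separatorP (@center_foot_far M k i). Qed.

Lemma cross_separatorP i j (p : 'I_k) : i != j ->
  exists2 ds, separator (leg i p) (leg j (rev_ord p)) = Some ds &
              separates (leg i p) (leg j (rev_ord p)) ds.
Proof.
move=> neq_ij; have [p_le rp_le] : p <= k /\ rev_ord p <= k by split; apply: ltnW.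
apply: separatorP; first by move/(leg_inj p_le rp_le)=> [/eqP]; rewrite (negbTE neq_ij).
by apply: cross_legs_far => //=; have := ltn_ord p; lia.
Qed.

Lemma foot_separator_touch x y p q ds :
  separates None (foot x) ds -> separates None (foot y) ds -> p < k -> q < k ->
  ~~ below (leg x p) (leg y q) ds.1.
Proof.
case: ds => d [] /=; rewrite /separates /= => sep_x sep_y p_lt q_lt.
- apply: box_below_link sep_x _ (center_touch y d q_lt).1.
  exact: (@leg_touch x p k d (ltnW p_lt) (leqnn k)).
- apply: box_below_link sep_y (center_touch x d p_lt).2 _.
  exact: (@leg_touch y k q d (leqnn k) (ltnW q_lt)).
Qed.

Lemma cross_separators_same_direction i j (p p' : 'I_k) d :
  below (leg i p) (leg j (rev_ord p)) d -> below (leg j (rev_ord p')) (leg i p') d -> False.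
Proof.
move=> below_p; apply/negP.
apply: box_below_link below_p (leg_touch j d _ _) (leg_touch i d _ _); exact: ltnW.
Qed.

Lemma forward_separators_antitone i j l (p p' : 'I_k) d : l != i ->
  below (leg i p) (leg j (rev_ord p)) d -> below (leg j p') (leg l (rev_ord p')) d ->
  p' <= p.
Proof.
move=> neq_li below_p below_p'; rewrite leqNgt; apply/negP => lt_pp'.
have touch : ~~ below (leg i p) (leg l (rev_ord p')) d.
  by apply: cross_touch => /=; [rewrite eq_sym | have := ltn_ord p'; lia].
have touch_j := leg_touch j d (ltnW (ltn_ord p')) (ltnW (ltn_ord (rev_ord p))).
have := box_below_link below_p touch_j touch.
by rewrite below_p'.
Qed.

Lemma backward_separators_antitone i j l (p p' : 'I_k) d : l != i ->
  below (leg j (rev_ord p)) (leg i p) d -> below (leg l (rev_ord p')) (leg j p') d ->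
  p' <= p.
Proof.
move=> neq_li below_p below_p'; rewrite leqNgt; apply/negP => lt_pp'.
have touch : ~~ below (leg l (rev_ord p')) (leg i p) d.
  by apply: cross_touch => //=; have := ltn_ord p'; lia.
have touch_j := leg_touch j d (ltnW (ltn_ord (rev_ord p))) (ltnW (ltn_ord p')).
have := box_below_link below_p' touch_j touch.
by rewrite below_p.
Qed.

Lemma cross_separators_inj i j l (p p' : 'I_k) ds ds' : l != i -> ds.1 = ds'.1 ->
  separates (leg i p) (leg j (rev_ord p)) ds -> separates (leg j p) (leg l (rev_ord p)) ds ->
  separates (leg i p') (leg j (rev_ord p')) ds' ->
  separates (leg j p') (leg l (rev_ord p')) ds' -> p = p'.
Proof.
case: ds ds' => d s [d' s'] neq_li /= <-; rewrite /separates.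
case: s s' => [] [] /= ij_p jl_p ij_p' jl_p'; apply: val_inj; apply/eqP; rewrite eqn_leq.
- by rewrite (forward_separators_antitone neq_li ij_p jl_p')
             (forward_separators_antitone neq_li ij_p' jl_p).
- by case: (cross_separators_same_direction ij_p ij_p').
- by case: (cross_separators_same_direction ij_p' ij_p).
- by rewrite (backward_separators_antitone neq_li ij_p jl_p')
             (backward_separators_antitone neq_li ij_p' jl_p).
Qed.

Lemma cross_separator_not_foot i j (p : 'I_k) ds0 ds :
  separates None (foot i) ds0 -> separates None (foot j) ds0 -> ds.1 = ds0.1 ->
  ~~ separates (leg i p) (leg j (rev_ord p)) ds.
Proof.
case: ds => d [] sep_i sep_j /= ->; rewrite /separates /=.
- exact: foot_separator_touch sep_i sep_j (ltn_ord p) (ltn_ord (rev_ord p)).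
- exact: foot_separator_touch sep_j sep_i (ltn_ord (rev_ord p)) (ltn_ord p).
Qed.

Local Notation colour := (option ('I_t * bool) * {ffun 'I_k -> option ('I_t * bool)})%type.

Definition pair_colour (i j : 'I_M) : colour :=
  (separator None (foot i), [ffun p : 'I_k => separator (leg i p) (leg j (rev_ord p))]).

Lemma card_colour : #|{: colour}| = t.*2.+1 ^ k.+1.
Proof. by rewrite card_prod card_ffun card_option card_prod !card_ord card_bool muln2 expnS. Qed.

Lemma monochromatic_path_dim (i j l : 'I_M) : i < j -> j < l ->
  pair_colour i j = pair_colour j l -> k < t.
Proof.
move=> lt_ij lt_jl [eq_foot /ffunP eq_cross].
have neq_ij : i != j by rewrite -val_eqE /= neq_ltn lt_ij.
have neq_li : l != i by rewrite -val_eqE /= neq_ltn (ltn_trans lt_ij lt_jl) orbT.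
have [ds0 separator_i sep_i] := foot_separatorP i.
have sep_j : separates None (foot j) ds0 by apply: separator_separates; rewrite -eq_foot.
have /fin_all_exists[ds ds_sep] : forall p : 'I_k, exists ds,
    separates (leg i p) (leg j (rev_ord p)) ds /\
    separates (leg j p) (leg l (rev_ord p)) ds.
  move=> p; have [ds sep_eq sep_ij] := cross_separatorP p neq_ij.
  exists ds; split=> //; apply: separator_separates.
  by move: (eq_cross p); rewrite !ffunE sep_eq.
have ds_foot p : (ds p).1 != ds0.1.
  by apply/eqP=> /(cross_separator_not_foot p sep_i sep_j); rewrite (ds_sep p).1.
pose D (o : option 'I_k) := if o is Some p then (ds p).1 else ds0.1.
have D_inj : injective D.
  case=> [p|] [p'|] //= eq_D.
  - congr Some; have [ij_p jl_p] := ds_sep p; have [ij_p' jl_p'] := ds_sep p'.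
    exact: cross_separators_inj neq_li eq_D ij_p jl_p ij_p' jl_p'.
  - by have := ds_foot p; rewrite eq_D eqxx.
  - by have := ds_foot p'; rewrite eq_D eqxx.
by have := leq_card D D_inj; rewrite card_option !card_ord.
Qed.

Lemma spider_box_dim : 2 ^ (t.*2.+1 ^ k.+1) < M -> k < t.
Proof.
rewrite -card_colour => /(pair_colouring_path pair_colour)[i [j [l [lt_ij lt_jl]]]].
exact: monochromatic_path_dim.
Qed.

End SpiderBoxicity.

Theorem theorem2 (R : realType) (k : nat) : (1 <= k)%N ->
  exists (T : finType) (e : rel T),
    is_tree e /\ boxicity_gt R (graph_pow e k) k.
Proof.
pose M := (2 ^ (k.*2.+1 ^ k.+1)).+1.
(* The construction needs no lower bound on k. *)
move=> _; exists (option ('I_M * 'I_k.+1)), (spider_rel M k).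
split; first exact: is_tree_spider.
move=> [t [le_tk [f f_rep]]].
suff : k < t by rewrite ltnNge le_tk.
apply: (spider_box_dim f_rep).
by rewrite ltnS leq_pexp2l // leq_exp2r // ltnS leq_double.
Qed.
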